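(* Let $a\in\mathbb{R}$ and $b>0$. The equation $g(x)+g(x+a)+g(x+b)=0$ ($x\in\mathbb{R}$) admits a continuous periodic solution $g:\mathbb{R}\to\mathbb{R}$ that is not identically zero if and only if $$\frac{a}{b}\in\left\{\frac{2+3k}{1+3m},\ \frac{1+3m}{2+3k}:\ (m,k)\in\mathbb{Z}^2\right\}.$$ In particular, if $a/b\notin\mathbb{Q}$ then the equation admits no nonzero continuous periodic solution, and there are infinitely many rational numbers $p/q$ such that $a/b=p/q$ implies the equation admits no nonzero continuous periodic solution. *)

From Stdlib Require Import Reals ZArith.
Open Scope R_scope.

Definition periodic (g : R -> R) : Prop :=
  exists T : R, 0 < T /\ forall x : R, g (x + T) = g x.

Definition has_nonzero_cont_periodic_sol (a b : R) : Prop :=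
  exists g : R -> R,
    continuity g /\ periodic g /\ (exists x0 : R, g x0 <> 0) /\
    forall x : R, g x + g (x + a) + g (x + b) = 0.

Definition in_exceptional_set (r : R) : Prop :=
  exists m k : Z,
    r = IZR (2 + 3 * k) / IZR (1 + 3 * m) \/
    r = IZR (1 + 3 * m) / IZR (2 + 3 * k).

Definition is_rational (r : R) : Prop :=
  exists p q : Z, (q <> 0)%Z /\ r = IZR p / IZR q.

From Stdlib Require Import Reals ZArith Lra Lia Classical.
From Coquelicot Require Import Coquelicot.
Open Scope R_scope.

(* Call w a characteristic frequency of (a, b) when 1 + e^(iwa) + e^(iwb) = 0,
   i.e. when x |-> cos (w x) solves g(x) + g(x+a) + g(x+b) = 0.
   1. If w is such a frequency, cos (w x) is a nonzero continuous periodic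
      solution.  Conversely, rescale a T-periodic solution to period 2*PI and
      look at its Fourier coefficients F(c) = int_0^(2PI) h(x) cos(n x + c) dx.
      The equation gives F(c) + F(c - n a') + F(c - n b') = 0 for all c, and
      since F is a sinusoid this forces n a', n b' to satisfy the
      characteristic equation as soon as F is not identically zero.  Some
      coefficient is nonzero by Fourier uniqueness, proved with the positive
      trigonometric kernels (1 + cos t)^N, which concentrate at t = 0.
   2. The solutions of 1 + e^(iu) + e^(iv) = 0 are u, v = +-2PI/3 mod 2PI, so
      a characteristic frequency exists iff a/b is a quotient of an integer
      = 1 mod 3 and an integer = 2 mod 3, in either order.
   The two remaining claims follow: such quotients are rational, and no
   multiple of 3 is such a quotient. *)

Lemma RInt_cont_ex (f : R -> R) (a b : R) : continuity f -> ex_RInt f a b.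
Proof.
  intros Hf. apply (ex_RInt_continuous (V := R_CompleteNormedModule)).
  intros z _. apply continuity_pt_filterlim, Hf.
Qed.

Lemma RInt_ext_all (f g : R -> R) (a b : R) :
  (forall x, f x = g x) -> RInt f a b = RInt g a b.
Proof. intros Hfg. apply RInt_ext. intros x _. apply Hfg. Qed.

Lemma RInt_add (f g : R -> R) (a b : R) : continuity f -> continuity g ->
  RInt (fun x => f x + g x) a b = RInt f a b + RInt g a b.
Proof.
  intros Hf Hg.
  exact (RInt_plus (V := R_CompleteNormedModule) f g a b
           (RInt_cont_ex f a b Hf) (RInt_cont_ex g a b Hg)).
Qed.

Lemma RInt_scale (f : R -> R) (l a b : R) : continuity f ->
  RInt (fun x => l * f x) a b = l * RInt f a b.
Proof.
  intros Hf. exact (RInt_scal (V := R_CompleteNormedModule) f a b l (RInt_cont_ex f a b Hf)).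
Qed.

Lemma RInt_lin (f g : R -> R) (c1 c2 a b : R) : continuity f -> continuity g ->
  RInt (fun x => c1 * f x + c2 * g x) a b = c1 * RInt f a b + c2 * RInt g a b.
Proof.
  intros Hf Hg. rewrite RInt_add by reg. rewrite !RInt_scale by assumption. reflexivity.
Qed.

Lemma RInt_chasles_cont (f : R -> R) (a b c : R) : continuity f ->
  RInt f a b + RInt f b c = RInt f a c.
Proof.
  intros Hf. exact (RInt_Chasles f a b c (RInt_cont_ex f a b Hf) (RInt_cont_ex f b c Hf)).
Qed.

Lemma RInt_shift (f : R -> R) (v a b : R) : continuity f ->
  RInt (fun x => f (x + v)) a b = RInt f (a + v) (b + v).
Proof.
  intros Hf.
  assert (E := RInt_comp_lin f 1 v a b (RInt_cont_ex f _ _ Hf)).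
  rewrite !Rmult_1_l in E. rewrite <- E.
  apply RInt_ext_all. intros x. simpl. unfold mult; simpl. rewrite Rmult_1_l, Rmult_1_l. reflexivity.
Qed.

Lemma RInt_periodic_start (F : R -> R) (T : R) : continuity F ->
  (forall x, F (x + T) = F x) -> forall u, RInt F u (u + T) = RInt F 0 T.
Proof.
  intros HF HP u.
  rewrite <- (RInt_chasles_cont F u T (u + T) HF).
  replace (RInt F T (u + T)) with (RInt F 0 u).
  - rewrite Rplus_comm. apply RInt_chasles_cont, HF.
  - replace T with (0 + T) at 1 by ring.
    rewrite <- RInt_shift by exact HF. apply RInt_ext_all. intros x. rewrite HP. reflexivity.
Qed.

Lemma RInt_ge_const (f : R -> R) (a b c : R) : a <= b -> continuity f ->
  (forall t, a <= t <= b -> c <= f t) -> c * (b - a) <= RInt f a b.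
Proof.
  intros Hab Hf Hc.
  replace (c * (b - a)) with (RInt (fun _ => c) a b)
    by (rewrite RInt_const; exact (Rmult_comm (b - a) c)).
  apply RInt_le; auto.
  - apply ex_RInt_const.
  - apply RInt_cont_ex, Hf.
  - intros t Ht. apply Hc. lra.
Qed.

Lemma RInt_peak_lower (G : R -> R) (a b c d E L : R) : continuity G ->
  a <= c <= d -> d <= b -> 0 <= E ->
  (forall t, a <= t <= b -> - E <= G t) -> (forall t, c <= t <= d -> L <= G t) ->
  (d - c) * L - (b - a) * E <= RInt G a b.
Proof.
  intros HG Hcd Hdb HE Hall Hpeak.
  assert (I1 : - E * (c - a) <= RInt G a c)
    by (apply RInt_ge_const; [lra | exact HG | intros; apply Hall; lra]).
  assert (I2 : L * (d - c) <= RInt G c d) by (apply RInt_ge_const; [lra | exact HG | exact Hpeak]).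
  assert (I3 : - E * (b - d) <= RInt G d b)
    by (apply RInt_ge_const; [lra | exact HG | intros; apply Hall; lra]).
  rewrite <- (RInt_chasles_cont G a d b HG), <- (RInt_chasles_cont G a c d HG).
  nra.
Qed.

Lemma sin_2kPI (k : Z) : sin (2 * IZR k * PI) = 0.
Proof. apply sin_eq_0_1. exists (2 * k)%Z. rewrite mult_IZR. ring. Qed.

Lemma cos_2kPI (k : Z) : cos (2 * IZR k * PI) = 1.
Proof.
  replace (2 * IZR k * PI) with (2 * (IZR k * PI)) by ring.
  rewrite cos_2a_sin, sin_eq_0_1 by (exists k; reflexivity). ring.
Qed.

Lemma cos_period_Z (x : R) (k : Z) : cos (x + 2 * IZR k * PI) = cos x.
Proof. rewrite cos_plus, cos_2kPI, sin_2kPI. ring. Qed.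

Lemma sin_period_Z (x : R) (k : Z) : sin (x + 2 * IZR k * PI) = sin x.
Proof. rewrite sin_plus, cos_2kPI, sin_2kPI. ring. Qed.

Lemma cos_eq_1_inv (x : R) : cos x = 1 -> exists k : Z, x = 2 * IZR k * PI.
Proof.
  intros H. replace x with (2 * (x / 2)) in H by field. rewrite cos_2a_sin in H.
  assert (Hs : sin (x / 2) = 0) by nra.
  destruct (sin_eq_0_0 _ Hs) as [k Hk]. exists k. lra.
Qed.

Lemma cos_le_of_abs_le (s t : R) : Rabs s <= Rabs t <= PI -> cos t <= cos s.
Proof.
  assert (Habs : forall y, cos (Rabs y) = cos y)
    by (intros y; unfold Rabs; destruct (Rcase_abs y); [apply cos_neg | reflexivity]).
  intros Hst. rewrite <- (Habs s), <- (Habs t).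
  pose proof (Rabs_pos s). apply cos_decr_1; lra.
Qed.

Inductive trig_poly : (R -> R) -> Prop :=
| trig_cos (k : Z) (c : R) : trig_poly (fun y => cos (IZR k * y + c))
| trig_add (f g : R -> R) : trig_poly f -> trig_poly g -> trig_poly (fun y => f y + g y)
| trig_scal (l : R) (f : R -> R) : trig_poly f -> trig_poly (fun y => l * f y)
| trig_ext (f g : R -> R) : (forall y, f y = g y) -> trig_poly f -> trig_poly g.

Lemma trig_poly_continuous (f : R -> R) : trig_poly f -> continuity f.
Proof.
  induction 1 as [k c | f g _ IHf _ IHg | l f _ IHf | f g Hfg _ IHf].
  - reg.
  - reg.
  - reg.
  - intros x. apply (continuity_pt_ext f g); auto.
Qed.

(* Trigonometric polynomials are stable under multiplication by cos (y - x0),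
   by the product-to-sum formula. *)
Lemma trig_poly_mul_cos (x0 : R) (f : R -> R) :
  trig_poly f -> trig_poly (fun y => f y * cos (y - x0)).
Proof.
  induction 1 as [k c | f g _ IHf _ IHg | l f _ IHf | f g Hfg _ IHf].
  - apply (trig_ext (fun y => / 2 * cos (IZR (k + 1) * y + (c - x0))
                             + / 2 * cos (IZR (k - 1) * y + (c + x0)))).
    + intros y. cbv beta. rewrite plus_IZR, minus_IZR.
      replace ((IZR k + 1) * y + (c - x0)) with ((IZR k * y + c) + (y - x0)) by ring.
      replace ((IZR k - 1) * y + (c + x0)) with ((IZR k * y + c) - (y - x0)) by ring.
      rewrite (cos_plus (IZR k * y + c) (y - x0)), (cos_minus (IZR k * y + c) (y - x0)). field.
    + apply trig_add; apply trig_scal; apply trig_cos.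
  - apply (trig_ext (fun y => f y * cos (y - x0) + g y * cos (y - x0))).
    + intros y. cbv beta. ring.
    + apply trig_add; assumption.
  - apply (trig_ext (fun y => l * (f y * cos (y - x0)))).
    + intros y. cbv beta. ring.
    + apply trig_scal, IHf.
  - apply (trig_ext (fun y => f y * cos (y - x0))); [intros y; rewrite Hfg; reflexivity | exact IHf].
Qed.

Lemma trig_poly_kernel (x0 : R) (N : nat) : trig_poly (fun y => (1 + cos (y - x0)) ^ N).
Proof.
  induction N as [|N IHN].
  - apply (trig_ext (fun y => cos (IZR 0 * y + 0))).
    + intros y. rewrite Rmult_0_l, Rplus_0_l, cos_0. reflexivity.
    + apply trig_cos.
  - apply (trig_ext (fun y => (1 + cos (y - x0)) ^ N + (1 + cos (y - x0)) ^ N * cos (y - x0))).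
    + intros y. simpl. ring.
    + apply trig_add; [exact IHN | apply trig_poly_mul_cos, IHN].
Qed.

Definition fourier_coef (h : R -> R) (n : Z) (c : R) : R :=
  RInt (fun x => h x * cos (IZR n * x + c)) 0 (2 * PI).

Lemma fourier_coef_sinusoid (h : R -> R) (n : Z) (c : R) : continuity h ->
  fourier_coef h n c = cos c * fourier_coef h n 0 + sin c * fourier_coef h n (PI / 2).
Proof.
  intros Hh. unfold fourier_coef. rewrite <- RInt_lin by reg.
  apply RInt_ext_all. intros x.
  rewrite Rplus_0_r, (cos_plus _ (PI / 2)), cos_PI2, sin_PI2, cos_plus. ring.
Qed.

Lemma fourier_coef_shift (h : R -> R) (a : R) (n : Z) (c : R) : continuity h ->
  (forall x, h (x + 2 * PI) = h x) ->
  RInt (fun x => h (x + a) * cos (IZR n * x + c)) 0 (2 * PI)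
  = fourier_coef h n (c - IZR n * a).
Proof.
  intros Hh HP.
  set (F := fun y => h y * cos (IZR n * y + (c - IZR n * a))).
  assert (HF : continuity F) by (unfold F; reg).
  transitivity (RInt (fun x => F (x + a)) 0 (2 * PI)).
  { apply RInt_ext_all. intros x. unfold F.
    replace (IZR n * (x + a) + (c - IZR n * a)) with (IZR n * x + c) by ring. reflexivity. }
  rewrite RInt_shift by exact HF.
  replace (2 * PI + a) with ((0 + a) + 2 * PI) by ring.
  apply RInt_periodic_start; [exact HF |].
  intros x. unfold F. rewrite HP.
  replace (IZR n * (x + 2 * PI) + (c - IZR n * a))
    with ((IZR n * x + (c - IZR n * a)) + 2 * IZR n * PI) by ring.
  rewrite cos_period_Z. reflexivity.
Qed.

Lemma trig_poly_orthogonal (h f : R -> R) : continuity h ->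
  (forall n c, fourier_coef h n c = 0) -> trig_poly f ->
  RInt (fun y => h y * f y) 0 (2 * PI) = 0.
Proof.
  intros Hh Hcoef Hf.
  induction Hf as [k c | f g Hf IHf Hg IHg | l f Hf IHf | f g Hfg _ IHf].
  - apply Hcoef.
  - apply trig_poly_continuous in Hf. apply trig_poly_continuous in Hg.
    transitivity (RInt (fun y => h y * f y) 0 (2 * PI) + RInt (fun y => h y * g y) 0 (2 * PI)).
    + rewrite <- RInt_add by reg. apply RInt_ext_all. intros y. ring.
    + rewrite IHf, IHg. apply Rplus_0_r.
  - apply trig_poly_continuous in Hf.
    transitivity (l * RInt (fun y => h y * f y) 0 (2 * PI)).
    + rewrite <- RInt_scale by reg. apply RInt_ext_all. intros y. ring.
    + rewrite IHf. apply Rmult_0_r.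
  - rewrite <- (RInt_ext_all (fun y => h y * f y)) by (intros y; rewrite Hfg; reflexivity). exact IHf.
Qed.

Lemma positive_near (H : R -> R) (x r : R) : continuity_pt H x -> 0 < H x -> 0 < r ->
  exists d, 0 < d <= r /\ forall t, Rabs (t - x) <= d -> H x / 2 <= H t.
Proof.
  intros Hc Hx Hr.
  destruct (Hc (H x / 2)) as [e [He Hnear]]; [lra |].
  exists (Rmin (e / 2) r). split; [split; [apply Rmin_glb_lt; lra | apply Rmin_r] |].
  intros t Ht. destruct (Req_dec t x) as [-> | Hne]; [lra |].
  assert (Hd : R_dist (H t) (H x) < H x / 2).
  { apply Hnear. split; [split; [constructor | auto] |].
    simpl. unfold R_dist. pose proof (Rmin_l (e / 2) r). lra. }
  unfold R_dist in Hd. apply Rabs_def2 in Hd. lra.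
Qed.

Lemma continuous_bounded (H : R -> R) (a b : R) : continuity H -> a <= b ->
  exists M, 0 <= M /\ forall t, a <= t <= b -> Rabs (H t) <= M.
Proof.
  intros Hc Hab.
  destruct (continuity_ab_maj (fun t => Rabs (H t)) a b Hab) as [tM [HM _]].
  { intros c _. apply (continuity_comp H Rabs Hc Rcontinuity_abs). }
  exists (Rabs (H tM)). split; [apply Rabs_pos | exact HM].
Qed.

Lemma geometric_domination (c1 c2 A B : R) : 0 < c2 < c1 -> 0 <= A -> 0 < B ->
  exists N : nat, A * c2 ^ N < B * c1 ^ N.
Proof.
  intros Hc HA HB.
  assert (Hq : 0 < c2 / c1 < 1).
  { split; [apply Rdiv_lt_0_compat; lra |].
    apply (Rmult_lt_reg_r c1); [lra |]. field_simplify; lra. }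
  destruct (pow_lt_1_zero (c2 / c1)) with (y := B / (A + 1)) as [N HN].
  - rewrite Rabs_pos_eq; lra.
  - apply Rdiv_lt_0_compat; lra.
  - exists N. specialize (HN N (le_n N)).
    rewrite Rabs_pos_eq in HN by (apply pow_le; lra).
    unfold Rdiv at 1 in HN. rewrite Rpow_mult_distr, pow_inv in HN.
    assert (Hp2 : 0 < c2 ^ N) by (apply pow_lt; lra).
    assert (Hp1 : 0 < c1 ^ N) by (apply pow_lt; lra).
    assert (Hkey : c2 ^ N * (A + 1) < B * c1 ^ N).
    { replace (c2 ^ N * (A + 1)) with ((c2 ^ N * / c1 ^ N) * (c1 ^ N * (A + 1))) by (field; lra).
      replace (B * c1 ^ N) with ((B / (A + 1)) * (c1 ^ N * (A + 1))) by (field; lra).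
      apply Rmult_lt_compat_r; [nra | exact HN]. }
    nra.
Qed.

Lemma kernel_le_of_abs_le (s t : R) (N : nat) : Rabs s <= Rabs t <= PI ->
  0 <= (1 + cos t) ^ N <= (1 + cos s) ^ N.
Proof.
  intros Hst. pose proof (COS_bound t). pose proof (cos_le_of_abs_le s t Hst).
  split; [apply pow_le; lra | apply pow_incr; lra].
Qed.

Lemma kernel_integral_pos (H : R -> R) : continuity H -> 0 < H 0 ->
  exists N : nat, 0 < RInt (fun t => H t * (1 + cos t) ^ N) (- PI) PI.
Proof.
  intros HH H0. pose proof PI_RGT_0 as Hpi.
  destruct (positive_near H 0 (PI / 2) (HH 0) H0 ltac:(lra)) as [d [Hd Hnear]].
  destruct (continuous_bounded H (- PI) PI HH ltac:(lra)) as [M [HM0 HM]].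
  set (c1 := 1 + cos (d / 2)). set (c2 := 1 + cos d).
  assert (Hc : 0 < c2 < c1).
  { assert (0 <= cos d) by (apply cos_ge_0; lra).
    assert (cos d < cos (d / 2)) by (apply cos_decreasing_1; lra).
    unfold c1, c2. lra. }
  destruct (geometric_domination c1 c2 (2 * PI * M) (d * (H 0 / 2)) Hc)
    as [N HN]; [nra | nra |].
  exists N.
  assert (HE : 0 <= M * c2 ^ N) by (apply Rmult_le_pos; [lra | apply pow_le; lra]).
  (* Away from the peak the integrand is small in absolute value... *)
  assert (Hall : forall t, - PI <= t <= PI -> - (M * c2 ^ N) <= H t * (1 + cos t) ^ N).
  { intros t Ht. assert (Ht' : Rabs t <= PI) by (apply Rabs_le; lra).
    destruct (Rle_lt_dec (Rabs t) d) as [Hin | Hout].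
    - destruct (kernel_le_of_abs_le 0 t N) as [HK _]; [rewrite Rabs_R0; split; [apply Rabs_pos | lra] |].
      assert (H 0 / 2 <= H t) by (apply Hnear; rewrite Rminus_0_r; exact Hin).
      assert (0 <= H t * (1 + cos t) ^ N) by (apply Rmult_le_pos; lra). lra.
    - destruct (kernel_le_of_abs_le d t N) as [HK HKd]; [rewrite Rabs_pos_eq; lra |].
      assert (Habs : Rabs (H t * (1 + cos t) ^ N) <= M * c2 ^ N).
      { rewrite Rabs_mult, (Rabs_pos_eq _ HK).
        apply Rmult_le_compat; [apply Rabs_pos | exact HK | apply HM, Ht | exact HKd]. }
      pose proof (Rle_abs (- (H t * (1 + cos t) ^ N))) as Hneg.
      rewrite Rabs_Ropp in Hneg. lra. }
  (* ... while near the peak it is large. *)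
  assert (Hpeak : forall t, - (d / 2) <= t <= d / 2 -> H 0 / 2 * c1 ^ N <= H t * (1 + cos t) ^ N).
  { intros t Ht. assert (Htd : Rabs t <= d / 2) by (apply Rabs_le; lra).
    destruct (kernel_le_of_abs_le t (d / 2) N) as [Hc1 HK]; [rewrite (Rabs_pos_eq (d / 2)); lra |].
    apply Rmult_le_compat; [lra | exact Hc1 | apply Hnear; rewrite Rminus_0_r; lra | exact HK]. }
  assert (Hint := RInt_peak_lower (fun t => H t * (1 + cos t) ^ N) (- PI) PI (- (d / 2)) (d / 2)
                    (M * c2 ^ N) (H 0 / 2 * c1 ^ N) ltac:(reg) ltac:(lra) ltac:(lra) HE Hall Hpeak).
  lra.
Qed.

Theorem fourier_uniqueness (h : R -> R) : continuity h -> (forall x, h (x + 2 * PI) = h x) ->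
  (forall n c, fourier_coef h n c = 0) -> forall x, h x = 0.
Proof.
  intros Hh HP Hcoef x0. apply NNPP. intros Hx0.
  set (H := fun t => / h x0 * h (t + x0)).
  destruct (kernel_integral_pos H) as [N HN].
  { unfold H. reg. }
  { unfold H. rewrite Rplus_0_l, Rinv_l by exact Hx0. lra. }
  set (F := fun y => h y * (1 + cos (y - x0)) ^ N).
  assert (HF : continuity F) by (unfold F; reg).
  assert (HFper : forall y, F (y + 2 * PI) = F y).
  { intros y. unfold F. rewrite HP.
    replace (y + 2 * PI - x0) with ((y - x0) + 2 * IZR 1 * PI) by (simpl; ring).
    rewrite cos_period_Z. reflexivity. }
  assert (HF0 : RInt F 0 (2 * PI) = 0)
    by exact (trig_poly_orthogonal h _ Hh Hcoef (trig_poly_kernel x0 N)).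
  (* Recentre the period at x0 to compare with the kernel integral. *)
  assert (Hrecentre : RInt (fun t => H t * (1 + cos t) ^ N) (- PI) PI = / h x0 * RInt F 0 (2 * PI)).
  { rewrite <- (RInt_periodic_start F (2 * PI) HF HFper (- PI + x0)).
    replace (- PI + x0 + 2 * PI) with (PI + x0) by ring.
    rewrite <- RInt_shift, <- RInt_scale by reg.
    apply RInt_ext_all. intros t. unfold H, F. cbv beta.
    replace (t + x0 - x0) with t by ring. ring. }
  rewrite Hrecentre, HF0, Rmult_0_r in HN. lra.
Qed.

Lemma fourier_coef_equation (h : R -> R) (al be : R) (n : Z) (c : R) : continuity h ->
  (forall x, h (x + 2 * PI) = h x) -> (forall x, h x + h (x + al) + h (x + be) = 0) ->
  fourier_coef h n c + fourier_coef h n (c - IZR n * al) + fourier_coef h n (c - IZR n * be) = 0.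
Proof.
  intros Hh HP Heq.
  rewrite <- !fourier_coef_shift by assumption.
  unfold fourier_coef. rewrite <- !RInt_add by reg.
  transitivity (RInt (fun _ => 0) 0 (2 * PI)).
  - apply RInt_ext_all. intros x. cbv beta.
    rewrite <- !Rmult_plus_distr_r, Heq. apply Rmult_0_l.
  - rewrite RInt_const. apply Rmult_0_r.
Qed.

(* Characteristic frequencies of the equation g(x) + g(x+a) + g(x+b) = 0:
   the real w with 1 + e^(iwa) + e^(iwb) = 0. *)
Definition char_root (a b w : R) : Prop :=
  1 + cos (w * a) + cos (w * b) = 0 /\ sin (w * a) + sin (w * b) = 0.

Lemma sinusoid_three_shifts (F : R -> R) (u v : R) :
  (forall c, F c = cos c * F 0 + sin c * F (PI / 2)) ->
  (forall c, F c + F (c - u) + F (c - v) = 0) ->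
  (exists c, F c <> 0) ->
  1 + cos u + cos v = 0 /\ sin u + sin v = 0.
Proof.
  intros HF Heq [c Hc].
  assert (E0 := Heq 0). assert (E1 := Heq (PI / 2)).
  rewrite (HF (0 - u)), (HF (0 - v)), !Rminus_0_l, !cos_neg, !sin_neg in E0.
  rewrite (HF (PI / 2 - u)), (HF (PI / 2 - v)), !cos_shift, !sin_shift in E1.
  assert (Hc' := HF c).
  revert E0 E1 Hc Hc'. generalize (F 0) (F (PI / 2)) (F c). intros A B Fc E0 E1 Hc Hc'.
  assert (HAB : A * A + B * B <> 0).
  { intros H0. apply Hc. rewrite Hc'.
    assert (A = 0) by nra. assert (B = 0) by nra. subst. ring. }
  split; apply (Rmult_eq_reg_l (A * A + B * B)); try exact HAB.
  - transitivity (A * (A + (cos u * A + - sin u * B) + (cos v * A + - sin v * B))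
                  + B * (B + (sin u * A + cos u * B) + (sin v * A + cos v * B))); [ring |].
    rewrite E0, E1. ring.
  - transitivity (A * (B + (sin u * A + cos u * B) + (sin v * A + cos v * B))
                  - B * (A + (cos u * A + - sin u * B) + (cos v * A + - sin v * B))); [ring |].
    rewrite E0, E1. ring.
Qed.

(* Every nonzero continuous 2PI-periodic solution has an integer
   characteristic frequency: the index of any nonzero Fourier coefficient. *)
Lemma periodic_solution_spectrum (h : R -> R) (al be : R) : continuity h ->
  (forall x, h (x + 2 * PI) = h x) -> (exists x0, h x0 <> 0) ->
  (forall x, h x + h (x + al) + h (x + be) = 0) ->
  exists n : Z, char_root al be (IZR n).
Proof.
  intros Hh HP [x0 Hx0] Heq.
  assert (Hcoef : exists n c, fourier_coef h n c <> 0).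
  { apply NNPP. intros Hno. apply Hx0, fourier_uniqueness; auto.
    intros n c. apply NNPP. intros Hnc. apply Hno. exists n, c. exact Hnc. }
  destruct Hcoef as [n [c Hc]]. exists n.
  apply (sinusoid_three_shifts (fourier_coef h n)).
  - intros c'. apply fourier_coef_sinusoid, Hh.
  - intros c'. apply fourier_coef_equation; assumption.
  - exists c. exact Hc.
Qed.

Lemma char_root_nonzero (a b w : R) : char_root a b w -> w <> 0.
Proof. intros [Hc _] ->. rewrite !Rmult_0_l, cos_0 in Hc. lra. Qed.

Lemma char_root_solution (a b w : R) : char_root a b w -> has_nonzero_cont_periodic_sol a b.
Proof.
  intros Hw. pose proof (char_root_nonzero a b w Hw) as Hw0. destruct Hw as [Hc Hs].
  pose proof PI_RGT_0 as Hpi.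
  exists (fun x => cos (w * x)). split; [reg | split; [| split]].
  - exists (2 * PI / Rabs w). split.
    { apply Rdiv_lt_0_compat; [lra | apply Rabs_pos_lt, Hw0]. }
    intros x. destruct (Rcase_abs w) as [Hneg | Hpos].
    + rewrite Rabs_left by exact Hneg.
      replace (w * (x + 2 * PI / - w)) with (w * x + 2 * IZR (-1) * PI) by (simpl; field; exact Hw0).
      apply cos_period_Z.
    + rewrite Rabs_right by exact Hpos.
      replace (w * (x + 2 * PI / w)) with (w * x + 2 * IZR 1 * PI) by (simpl; field; exact Hw0).
      apply cos_period_Z.
  - exists 0. rewrite Rmult_0_r, cos_0. lra.
  - intros x. rewrite !Rmult_plus_distr_l, !cos_plus.
    transitivity (cos (w * x) * (1 + cos (w * a) + cos (w * b))
                  - sin (w * x) * (sin (w * a) + sin (w * b))); [ring |].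
    rewrite Hc, Hs. ring.
Qed.

(* Conversely, every nonzero continuous periodic solution has a characteristic
   frequency: rescale its period to 2PI and apply the spectral lemma. *)
Lemma solution_char_root (a b : R) : has_nonzero_cont_periodic_sol a b -> exists w, char_root a b w.
Proof.
  intros [g [Hg [[T [HT HgT]] [[x0 Hx0] Heq]]]]. pose proof PI_RGT_0 as Hpi.
  set (s := T / (2 * PI)).
  assert (Hs : 0 < s) by (apply Rdiv_lt_0_compat; lra).
  destruct (periodic_solution_spectrum (fun x => g (s * x)) (a / s) (b / s)) as [n [Hc Hsin]].
  - apply (continuity_comp (fun x => s * x) g); [reg | exact Hg].
  - intros x. replace (s * (x + 2 * PI)) with (s * x + T) by (unfold s; field; lra). apply HgT.
  - exists (x0 / s). replace (s * (x0 / s)) with x0 by (field; lra). exact Hx0.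
  - intros x. replace (s * (x + a / s)) with (s * x + a) by (field; lra).
    replace (s * (x + b / s)) with (s * x + b) by (field; lra). apply Heq.
  - exists (IZR n / s). unfold char_root.
    replace (IZR n / s * a) with (IZR n * (a / s)) by (field; lra).
    replace (IZR n / s * b) with (IZR n * (b / s)) by (field; lra).
    split; assumption.
Qed.

(* u and v are, modulo 2PI, the angles 2PI/3 and 4PI/3 = -2PI/3. *)
Definition third_turns (u v : R) : Prop :=
  exists j l : Z, u = 2 * PI / 3 * IZR (1 + 3 * j) /\ v = 2 * PI / 3 * IZR (2 + 3 * l).

Lemma unit_triangle (u v : R) :
  1 + cos u + cos v = 0 /\ sin u + sin v = 0 <-> third_turns u v \/ third_turns v u.
Proof.
  assert (Hturns : forall u v, third_turns u v -> 1 + cos u + cos v = 0 /\ sin u + sin v = 0).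
  { intros u' v' [j [l [-> ->]]].
    replace (2 * PI / 3 * IZR (1 + 3 * j)) with (2 * (PI / 3) + 2 * IZR j * PI)
      by (rewrite plus_IZR, mult_IZR; field).
    replace (2 * PI / 3 * IZR (2 + 3 * l)) with (- (2 * (PI / 3)) + 2 * IZR (l + 1) * PI)
      by (rewrite !plus_IZR, mult_IZR; field).
    rewrite !cos_period_Z, !sin_period_Z, cos_neg, sin_neg, cos_2PI3. lra. }
  split.
  - intros [Hc Hs].
    assert (Hsqrt : sqrt 3 * sqrt 3 = 3) by (apply sqrt_sqrt; lra).
    assert (Hsu := sin2_cos2 u). assert (Hsv := sin2_cos2 v). unfold Rsqr in *.
    assert (Hcu : cos u = -1 / 2) by nra.
    assert (Hpm : (sin u - sqrt 3 / 2) * (sin u + sqrt 3 / 2) = 0) by nra.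
    destruct (Rmult_integral _ _ Hpm) as [Hplus | Hminus].
    + left.
      destruct (cos_eq_1_inv (u - 2 * (PI / 3))) as [j Hj].
      { rewrite cos_minus, cos_2PI3, sin_2PI3, Hcu. nra. }
      destruct (cos_eq_1_inv (v + 2 * (PI / 3))) as [l Hl].
      { rewrite cos_plus, cos_2PI3, sin_2PI3. nra. }
      exists j, (l - 1)%Z. rewrite !plus_IZR, !mult_IZR, minus_IZR. split; lra.
    + right.
      destruct (cos_eq_1_inv (v - 2 * (PI / 3))) as [l Hl].
      { rewrite cos_minus, cos_2PI3, sin_2PI3. nra. }
      destruct (cos_eq_1_inv (u + 2 * (PI / 3))) as [j Hj].
      { rewrite cos_plus, cos_2PI3, sin_2PI3, Hcu. nra. }
      exists l, (j - 1)%Z. rewrite !plus_IZR, !mult_IZR, minus_IZR. split; lra.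
  - intros [Huv | Hvu]; [apply Hturns, Huv |].
    destruct (Hturns v u Hvu). split; lra.
Qed.

Lemma char_root_exceptional (a b : R) : 0 < b ->
  (exists w, char_root a b w) <-> in_exceptional_set (a / b).
Proof.
  intros Hb. pose proof PI_RGT_0 as Hpi. split.
  - intros [w Hw]. pose proof (char_root_nonzero a b w Hw) as Hw0.
    assert (Hratio : a / b = (w * a) / (w * b)) by (field; lra).
    apply unit_triangle in Hw. destruct Hw as [[j [l [Hu Hv]]] | [m [k [Hv Hu]]]].
    + exists j, l. right.
      assert (IZR (2 + 3 * l) <> 0) by (apply not_0_IZR; lia).
      rewrite Hratio, Hu, Hv. field. split; lra.
    + exists m, k. left.
      assert (IZR (1 + 3 * m) <> 0) by (apply not_0_IZR; lia).
      rewrite Hratio, Hu, Hv. field. split; lra.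
  - intros [m [k [Hr | Hr]]].
    + assert (Hp : IZR (1 + 3 * m) <> 0) by (apply not_0_IZR; lia).
      exists (2 * PI / 3 * IZR (1 + 3 * m) / b). apply unit_triangle. right.
      exists m, k. split; [field; lra |].
      replace a with (b * (a / b)) by (field; lra). rewrite Hr. field. split; lra.
    + assert (Hp : IZR (2 + 3 * k) <> 0) by (apply not_0_IZR; lia).
      exists (2 * PI / 3 * IZR (2 + 3 * k) / b). apply unit_triangle. left.
      exists m, k. split; [| field; lra].
      replace a with (b * (a / b)) by (field; lra). rewrite Hr. field. split; lra.
Qed.

Lemma exceptional_rational (r : R) : in_exceptional_set r -> is_rational r.
Proof.
  intros [m [k [Hr | Hr]]].
  - exists (2 + 3 * k)%Z, (1 + 3 * m)%Z. split; [lia | exact Hr].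
  - exists (1 + 3 * m)%Z, (2 + 3 * k)%Z. split; [lia | exact Hr].
Qed.

Lemma multiple_of_3_not_exceptional (z : Z) : ~ in_exceptional_set (IZR (3 * z)).
Proof.
  intros [m [k [Hr | Hr]]].
  - assert (Hm : IZR (1 + 3 * m) <> 0) by (apply not_0_IZR; lia).
    assert (E : IZR (3 * z * (1 + 3 * m)) = IZR (2 + 3 * k))
      by (rewrite mult_IZR, Hr; field; exact Hm).
    apply eq_IZR in E. lia.
  - assert (Hk : IZR (2 + 3 * k) <> 0) by (apply not_0_IZR; lia).
    assert (E : IZR (3 * z * (2 + 3 * k)) = IZR (1 + 3 * m))
      by (rewrite mult_IZR, Hr; field; exact Hk).
    apply eq_IZR in E. lia.
Qed.

Theorem mainTheorem8 :
  (forall a b : R, 0 < b ->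
     (has_nonzero_cont_periodic_sol a b <-> in_exceptional_set (a / b)))
  /\
  (forall a b : R, 0 < b -> ~ is_rational (a / b) ->
     ~ has_nonzero_cont_periodic_sol a b)
  /\
  (forall N : nat, exists p q : Z, (0 < q)%Z /\ INR N < IZR p / IZR q /\
     forall a b : R, 0 < b -> a / b = IZR p / IZR q ->
       ~ has_nonzero_cont_periodic_sol a b).
Proof.
  assert (Hchar : forall a b : R, 0 < b ->
            has_nonzero_cont_periodic_sol a b <-> in_exceptional_set (a / b)).
  { intros a b Hb. rewrite <- char_root_exceptional by exact Hb. split.
    - apply solution_char_root.
    - intros [w Hw]. exact (char_root_solution a b w Hw). }
  split; [exact Hchar | split].
  - intros a b Hb Hirr Hsol. apply Hirr, exceptional_rational, Hchar; assumption.
  - intros N. exists (3 * (Z.of_nat N + 1))%Z, 1%Z. rewrite Rdiv_1_r.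
    split; [lia | split].
    + rewrite mult_IZR, plus_IZR, <- INR_IZR_INZ. pose proof (pos_INR N). lra.
    + intros a b Hb Hab Hsol.
      apply (multiple_of_3_not_exceptional (Z.of_nat N + 1)).
      rewrite <- Hab. apply Hchar; assumption.
Qed.
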